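(* Let $(X,V,v)$ be a measure space over a prering $V$ with $X\in V$, let $S=S(V)$ and let $N$ be the family of null sets. For $A\subset X$ the following are equivalent: (a) $A\in V_c$; (b) $A=B\triangle D$ for some $B\in S^{\delta\sigma}$ and $D\in N$; (c) $A=B\triangle D$ for some $B\in V^{\sigma\delta}$ and $D\in N$. Here $\triangle$ is symmetric difference, $W^\sigma$ (resp. $W^\delta$) denotes countable unions (resp. countable intersections) of members of $W$, $S^{\delta\sigma}=(S^\delta)^\sigma$ and $V^{\sigma\delta}=(V^\sigma)^\delta$.
   Context: Measure space: $X$ a set, $V$ a prering (i.e. $\emptyset\in V$ and for $A,B\in V$ the sets $A\cap B$, $A\setminus B$ belong to $S(V)$, the family of finite disjoint unions of members of $V$), $v:V\to[0,\infty)$ countably additive. $S(V,\mathbb R)$: simple functions $\sum r_ic_{A_i}$ with $A_i\in V$ pairwise disjoint; $\int h\,dv=\sum r_iv(A_i)$, $\|h\|=\int|h|dv$. Null set: for every $\varepsilon>0$ covered by countably many $A_t\in V$ with $\sum v(A_t)<\varepsilon$. Basic sequence: $s_n=h_1+\dots+h_n$ with simple $h_n$, $\|h_n\|\le M4^{-n}$. $L(v,\mathbb R)$: almost-everywhere limits of basic sequences. $V_c=\{A\subset X: c_A\in L(v,\mathbb R)\}$. *)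

From Stdlib Require Import Reals Lra List ClassicalEpsilon.
Import ListNotations.
Open Scope R_scope.

Set Implicit Arguments.

Definition set (X : Type) := X -> Prop.

Definition indic {X : Type} (A : set X) (x : X) : R :=
  if excluded_middle_informative (A x) then 1 else 0.

Definition emptyset {X : Type} : set X := fun _ => False.
Definition fullset {X : Type} : set X := fun _ => True.

Definition list_disjoint {X : Type} (l : list (set X)) : Prop :=
  forall i j, (i < length l)%nat -> (j < length l)%nat -> i <> j ->
    forall x, ~ (nth i l emptyset x /\ nth j l emptyset x).

Definition SV {X : Type} (V : set (set X)) (A : set X) : Prop :=
  exists l : list (set X), Forall V l /\ list_disjoint l /\
    (forall x, A x <-> exists B, In B l /\ B x).

Definition prering {X : Type} (V : set (set X)) : Prop :=
  V emptyset /\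
  (forall A B, V A -> V B -> SV V (fun x => A x /\ B x)) /\
  (forall A B, V A -> V B -> SV V (fun x => A x /\ ~ B x)).

(* v : V -> [0, oo) countably additive (values of v off V are irrelevant) *)
Definition count_additive {X : Type} (V : set (set X)) (v : set X -> R) : Prop :=
  (forall A, V A -> 0 <= v A) /\
  (forall (A : set X) (An : nat -> set X),
     V A -> (forall n, V (An n)) ->
     (forall n m, n <> m -> forall x, ~ (An n x /\ An m x)) ->
     (forall x, A x <-> exists n, An n x) ->
     infinite_sum (fun n => v (An n)) (v A)).

Definition measure_space {X : Type} (V : set (set X)) (v : set X -> R) : Prop :=
  prering V /\ count_additive V v.

Definition simple_rep {X : Type} (V : set (set X)) (l : list (R * set X))
    (h : X -> R) : Prop :=
  Forall (fun p => V (snd p)) l /\ list_disjoint (map snd l) /\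
  (forall x, h x = fold_right (fun p acc => fst p * indic (snd p) x + acc) 0 l).

Definition rep_integral {X : Type} (v : set X -> R) (l : list (R * set X)) : R :=
  fold_right (fun p acc => fst p * v (snd p) + acc) 0 l.

(* ||h|| = int |h| dv; for a disjoint representation |h| = sum |r_i| c_{A_i} *)
Definition rep_norm {X : Type} (v : set X -> R) (l : list (R * set X)) : R :=
  rep_integral v (map (fun p => (Rabs (fst p), snd p)) l).

Definition simple_norm_le {X : Type} (V : set (set X)) (v : set X -> R)
    (h : X -> R) (b : R) : Prop :=
  exists l, simple_rep V l h /\ rep_norm v l <= b.

(* basic sequence: s_n = h_1 + ... + h_n, h_n simple, ||h_n|| <= M 4^{-n}.
   Here indexing is shifted: s n = h 0 + ... + h n, ||h n|| <= M 4^{-(n+1)}. *)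
Definition basic_seq {X : Type} (V : set (set X)) (v : set X -> R)
    (s : nat -> X -> R) : Prop :=
  exists (h : nat -> X -> R) (M : R),
    (forall n, simple_norm_le V v (h n) (M * (/ 4) ^ (S n))) /\
    (forall n x, s n x = sum_f_R0 (fun k => h k x) n).

Definition null_set {X : Type} (V : set (set X)) (v : set X -> R) (D : set X) : Prop :=
  forall eps, 0 < eps ->
    exists (At : nat -> set X) (l : R),
      (forall t, V (At t)) /\
      (forall x, D x -> exists t, At t x) /\
      infinite_sum (fun t => v (At t)) l /\ l < eps.

Definition L1 {X : Type} (V : set (set X)) (v : set X -> R) (f : X -> R) : Prop :=
  exists (s : nat -> X -> R) (N : set X),
    basic_seq V v s /\ null_set V v N /\
    (forall x, ~ N x -> Un_cv (fun n => s n x) (f x)).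

Definition Vc {X : Type} (V : set (set X)) (v : set X -> R) (A : set X) : Prop :=
  L1 V v (indic A).

Definition sigma_of {X : Type} (W : set (set X)) (A : set X) : Prop :=
  exists Bn : nat -> set X, (forall n, W (Bn n)) /\ (forall x, A x <-> exists n, Bn n x).

Definition delta_of {X : Type} (W : set (set X)) (A : set X) : Prop :=
  exists Bn : nat -> set X, (forall n, W (Bn n)) /\ (forall x, A x <-> forall n, Bn n x).

Definition symdiff {X : Type} (B D : set X) : set X :=
  fun x => (B x /\ ~ D x) \/ (D x /\ ~ B x).

(* (a) ⇒ (b): if a basic sequence s_n converges to c_A off a null set N, each superlevel set
   {s_n > 1/2} is a boolean combination of the finitely many members of V used by h_0, …, h_n,
   hence lies in S = S(V), and A differs from B = ⋃_m ⋂_n {s_(m+n) > 1/2} ∈ S^δσ only inside N.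
   (b) ⇒ (a): write B = ⋃_m ⋂_i C_mi with C_mi ∈ S and let D_kn = ⋃_(m≤k) ⋂_(i≤n) C_mi
   ([cupcap k n]), increasing in k and decreasing in n.  The limits a_k = lim_n v(D_kn) increase
   to some a; choosing increasing k_j, n_j with a − a_(k_j) and v(D_(k_j n_j)) − a_(k_j) at most
   4^−(j+1) gives v(T_(j+1) Δ T_j) ≤ 3·4^−(j+1) for T_j = D_(k_j n_j), so the c_(T_j) are the
   partial sums of a basic sequence.  It converges to c_B outside the set of points that are not
   in B but lie in infinitely many T_j; this set is null because T_j ∖ B is covered by the
   differences D_(k_j, n_j+n) ∖ D_(k_j, n_j+n+1), of total measure at most 4^−(j+1).  Changing a
   function on a null set does not affect membership in L.
   (c): complements exchange S^δσ and V^σδ (this uses X ∈ V), and V_c is closed under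
   complement, since c_X − s_n is again a basic sequence. *)

From Stdlib Require Import Reals Lra Lia List Classical ClassicalEpsilon Cantor.
Import ListNotations.
Open Scope R_scope.

Section FiniteDisjointUnions.
Context {X : Type}.

Definition disjoint (A B : set X) : Prop := forall x, ~ (A x /\ B x).
Definition list_union (l : list (set X)) (x : X) : Prop := exists B, In B l /\ B x.
Definition pairwise_disjoint (l : list (set X)) : Prop := ForallOrdPairs disjoint l.

Lemma list_disjoint_iff l : list_disjoint l <-> pairwise_disjoint l.
Proof.
  unfold list_disjoint, pairwise_disjoint; split.
  - induction l as [|a l IH]; intros H; constructor.
    + apply Forall_forall; intros b Hb.
      destruct (In_nth l b emptyset Hb) as [j [Hj <-]].
      intros x. exact (H 0%nat (S j) ltac:(simpl; lia) ltac:(simpl; lia) ltac:(lia) x).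
    + apply IH. intros i j Hi Hj Hij. apply (H (S i) (S j)); simpl; lia.
  - induction 1 as [|a l Ha Hl IH]; intros i j Hi Hj Hij x; simpl in Hi, Hj; [lia|].
    rewrite Forall_forall in Ha.
    destruct i as [|i], j as [|j]; simpl; [lia| | |apply IH; lia].
    + apply (Ha (nth j l emptyset)), nth_In; lia.
    + assert (Hi' : (i < length l)%nat) by lia.
      intros [H1 H2]. apply (Ha (nth i l emptyset) (nth_In _ _ Hi') x). tauto.
Qed.

Lemma list_union_nil x : ~ list_union [] x.
Proof. intros [B [[] _]]. Qed.

Lemma list_union_cons a l x : list_union (a :: l) x <-> a x \/ list_union l x.
Proof.
  unfold list_union; split.
  - intros [B [[<-|HB] Hx]]; [left | right; exists B]; auto.
  - intros [H|[B [HB Hx]]]; [exists a | exists B]; simpl; auto.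
Qed.

Lemma nth_emptyset_lt (l : list (set X)) n x : nth n l emptyset x -> (n < length l)%nat.
Proof.
  intros Hx. destruct (Nat.lt_ge_cases n (length l)) as [H|H]; auto.
  rewrite nth_overflow in Hx; auto; destruct Hx.
Qed.

Lemma list_union_nth (l : list (set X)) x : list_union l x <-> exists n, nth n l emptyset x.
Proof.
  split.
  - intros [B [HB Hx]]. destruct (In_nth l B emptyset HB) as [n [_ <-]]. eauto.
  - intros [n Hx]. exists (nth n l emptyset). split; auto. apply nth_In, (nth_emptyset_lt _ _ _ Hx).
Qed.

Lemma list_union_app l1 l2 x : list_union (l1 ++ l2) x <-> list_union l1 x \/ list_union l2 x.
Proof.
  unfold list_union; split.
  - intros [B [HB Hx]]. apply in_app_or in HB as [HB|HB]; [left|right]; eauto.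
  - intros [[B [HB Hx]]|[B [HB Hx]]]; exists B; split; auto; apply in_or_app; auto.
Qed.

Lemma pairwise_disjoint_app l1 l2 : pairwise_disjoint l1 -> pairwise_disjoint l2 ->
  (forall a b, In a l1 -> In b l2 -> disjoint a b) -> pairwise_disjoint (l1 ++ l2).
Proof.
  unfold pairwise_disjoint; induction 1 as [|a l Ha Hl IH]; intros H2 H; simpl; auto.
  constructor.
  - apply Forall_app; split; auto. apply Forall_forall; intros b Hb; apply H; simpl; auto.
  - apply IH; auto. intros; apply H; simpl; auto.
Qed.

Lemma pairwise_disjoint_cons_head a l : pairwise_disjoint (a :: l) -> disjoint a (list_union l).
Proof.
  intros H. inversion H as [|? ? Ha Hl]; subst. intros x [H1 [B [HB H2]]].
  rewrite Forall_forall in Ha. apply (Ha B HB x); auto.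
Qed.

Lemma pairwise_disjoint_cons_tail a l : pairwise_disjoint (a :: l) -> pairwise_disjoint l.
Proof. intros H; inversion H; auto. Qed.

End FiniteDisjointUnions.

Section SimpleSets.
Context {X : Type}.
Variable V : set (set X).
Hypothesis HpV : prering V.

Definition SV_decomp (A : set X) (l : list (set X)) : Prop :=
  Forall V l /\ pairwise_disjoint l /\ (forall x, A x <-> list_union l x).

Lemma SV_iff A : SV V A <-> exists l, SV_decomp A l.
Proof.
  unfold SV, SV_decomp; split; intros [l [H1 [H2 H3]]]; exists l;
    rewrite list_disjoint_iff in *; auto.
Qed.

Lemma SV_decomp_ext A B l : SV_decomp A l -> (forall x, B x <-> A x) -> SV_decomp B l.
Proof. intros [H1 [H2 H3]] E; split; [|split]; auto. intros y; rewrite E; apply H3. Qed.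

Lemma SV_ext A B : SV V A -> (forall x, B x <-> A x) -> SV V B.
Proof. rewrite !SV_iff. intros [l Hl] E. exists l. eapply SV_decomp_ext; eauto. Qed.

Lemma SV_decomp_single A : V A -> SV_decomp A [A].
Proof.
  intros H. repeat constructor; auto.
  - intros Hx; exists A; simpl; auto.
  - intros [B [[<-|[]] Hx]]; auto.
Qed.

Lemma SV_of_V A : V A -> SV V A.
Proof. intros H. apply SV_iff. exists [A]. apply SV_decomp_single, H. Qed.

Lemma V_nth l n : Forall V l -> V (nth n l emptyset).
Proof.
  intros H. destruct (Nat.lt_ge_cases n (length l)).
  - rewrite Forall_forall in H; apply H, nth_In; auto.
  - rewrite nth_overflow; auto. apply HpV.
Qed.

Lemma SV_of_empty A : (forall x, ~ A x) -> SV V A.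
Proof.
  intros H. apply SV_iff. exists []. split; [|split]; [constructor|constructor|].
  intros x; split; [intros Hx; destruct (H x Hx) | intros Hx; destruct (list_union_nil _ Hx)].
Qed.

Lemma SV_decomp_app A B C la lb : SV_decomp A la -> SV_decomp B lb -> disjoint A B ->
  (forall x, C x <-> A x \/ B x) -> SV_decomp C (la ++ lb).
Proof.
  intros [Ha1 [Ha2 Ha3]] [Hb1 [Hb2 Hb3]] D E. repeat split.
  - apply Forall_app; auto.
  - apply pairwise_disjoint_app; auto. intros a b Ha Hb x [Hx1 Hx2].
    apply (D x); split; [apply Ha3; exists a | apply Hb3; exists b]; auto.
  - intros Hx. apply list_union_app. rewrite <- Ha3, <- Hb3. apply E, Hx.
  - intros Hx. apply E. rewrite Ha3, Hb3. apply list_union_app, Hx.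
Qed.

Lemma SV_disjoint_union A B C : SV V A -> SV V B -> disjoint A B ->
  (forall x, C x <-> A x \/ B x) -> SV V C.
Proof.
  rewrite !SV_iff. intros [la Ha] [lb Hb] D E. exists (la ++ lb).
  eapply SV_decomp_app; eauto.
Qed.

Lemma SV_refined_union (l : list (set X)) (F : set X -> set X) : pairwise_disjoint l ->
  (forall a, In a l -> SV V (F a)) -> (forall a x, F a x -> a x) ->
  SV V (fun x => exists a, In a l /\ F a x).
Proof.
  intros Hl HF Hsub. induction l as [|a l IH].
  - apply SV_of_empty. intros x [a [[] _]].
  - apply (SV_disjoint_union (F a) (fun x => exists b, In b l /\ F b x)).
    + apply HF; simpl; auto.
    + apply IH; [eapply pairwise_disjoint_cons_tail; eauto | intros; apply HF; simpl; auto].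
    + intros x [Ha [b [Hb Hbx]]]. apply (pairwise_disjoint_cons_head _ _ Hl x).
      split; [apply Hsub, Ha | exists b; split; [|apply Hsub]; auto].
    + intros x; split.
      * intros [b [[<-|Hb] Hbx]]; [left | right; exists b]; auto.
      * intros [Ha|[b [Hb Hbx]]]; [exists a | exists b]; simpl; auto.
Qed.

Lemma SV_inter_V a B : V a -> SV V B -> SV V (fun x => a x /\ B x).
Proof.
  intros Ha HB. apply SV_iff in HB as [lb [Hb1 [Hb2 Hb3]]].
  apply (SV_ext (fun x => exists b, In b lb /\ (b x /\ a x))).
  - apply SV_refined_union; auto; [|tauto].
    intros b Hb. rewrite Forall_forall in Hb1. apply HpV; auto.
  - intros x; rewrite Hb3. unfold list_union; firstorder.
Qed.

Lemma SV_inter A B : SV V A -> SV V B -> SV V (fun x => A x /\ B x).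
Proof.
  intros HA HB. apply SV_iff in HA as [la [Ha1 [Ha2 Ha3]]].
  apply (SV_ext (fun x => exists a, In a la /\ (a x /\ B x))).
  - apply SV_refined_union; auto; [|tauto].
    intros a Ha. rewrite Forall_forall in Ha1. apply SV_inter_V; auto.
  - intros x; rewrite Ha3. unfold list_union; firstorder.
Qed.

Lemma SV_diff_list_union a lb : V a -> Forall V lb ->
  SV V (fun x => a x /\ ~ list_union lb x).
Proof.
  intros Ha. induction 1 as [|b lb Hb _ IH].
  - apply (SV_ext a); [apply SV_of_V, Ha|]. intros x. pose proof (@list_union_nil X x). tauto.
  - apply (SV_ext (fun x => (a x /\ ~ b x) /\ (a x /\ ~ list_union lb x))).
    + apply SV_inter; auto. apply HpV; auto.
    + intros x; rewrite list_union_cons; tauto.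
Qed.

Lemma SV_diff A B : SV V A -> SV V B -> SV V (fun x => A x /\ ~ B x).
Proof.
  intros HA HB. apply SV_iff in HA as [la [Ha1 [Ha2 Ha3]]].
  apply SV_iff in HB as [lb [Hb1 [_ Hb3]]].
  apply (SV_ext (fun x => exists a, In a la /\ (a x /\ ~ list_union lb x))).
  - apply SV_refined_union; auto; [|tauto].
    intros a Ha. rewrite Forall_forall in Ha1. apply SV_diff_list_union; auto.
  - intros x; rewrite Ha3, Hb3. unfold list_union at 1; firstorder.
Qed.

Lemma SV_union A B : SV V A -> SV V B -> SV V (fun x => A x \/ B x).
Proof.
  intros HA HB. apply (SV_disjoint_union A (fun x => B x /\ ~ A x)); auto.
  - apply SV_diff; auto.
  - intros x; tauto.
  - intros x; tauto.
Qed.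

Hypothesis HX : V fullset.

Lemma SV_full : SV V fullset.
Proof. apply SV_of_V, HX. Qed.

Lemma SV_compl A : SV V A -> SV V (fun x => ~ A x).
Proof. intros HA. apply (SV_ext _ _ (SV_diff _ _ SV_full HA)). unfold fullset; tauto. Qed.

Lemma SV_determined_by (L : list (set X)) : Forall (SV V) L ->
  forall Q : set X, (forall x y, (forall B, In B L -> (B x <-> B y)) -> Q x -> Q y) -> SV V Q.
Proof.
  induction L as [|B L IH]; intros HL Q HQ.
  - destruct (classic (exists x, Q x)) as [[x Hx]|Hn].
    + apply (SV_ext _ _ SV_full). intros y; split; [easy|]. intros _.
      apply (HQ x y); auto. intros B [].
    + apply SV_of_empty. intros x Hx; apply Hn; eauto.
  - inversion HL as [|? ? HB HL']; subst.
    (* [Q_with b] saturates [Q] restricted to [{B = b}] with respect to the tail [L]. *)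
    set (Q_with := fun b : Prop => fun x =>
      exists y, (B y <-> b) /\ Q y /\ (forall C, In C L -> (C x <-> C y))).
    assert (HQ_with : forall b, SV V (Q_with b)).
    { intros b. apply IH; auto. intros x z Hxz [y [Hy1 [Hy2 Hy3]]].
      exists y; split; [exact Hy1 | split; [exact Hy2 |]].
      intros C HC. rewrite <- (Hxz C HC). apply Hy3, HC. }
    apply (SV_ext _ _ (SV_union _ _ (SV_inter _ _ HB (HQ_with True))
                                    (SV_inter _ _ (SV_compl _ HB) (HQ_with False)))).
    intros x; split.
    + intros Hx. destruct (classic (B x)); [left|right]; split; auto; exists x; repeat split; tauto.
    + intros [[Hb [y [Hy1 [Hy2 Hy3]]]]|[Hb [y [Hy1 [Hy2 Hy3]]]]]; apply (HQ y x); auto;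
        intros C [<-|HC]; try tauto; symmetry; apply Hy3; auto.
Qed.

End SimpleSets.

Definition lsum {T : Type} (f : T -> R) (l : list T) : R := fold_right (fun a acc => f a + acc) 0 l.

Lemma lsum_app {T} (f : T -> R) l1 l2 : lsum f (l1 ++ l2) = lsum f l1 + lsum f l2.
Proof. induction l1; simpl; [lra | rewrite IHl1; lra]. Qed.

Lemma lsum_plus {T} (f g : T -> R) l : lsum (fun a => f a + g a) l = lsum f l + lsum g l.
Proof. induction l; simpl; [lra | rewrite IHl; lra]. Qed.

Lemma lsum_ext {T} (f g : T -> R) l : (forall a, In a l -> f a = g a) -> lsum f l = lsum g l.
Proof. induction l; simpl; intros H; auto. rewrite H, IHl; auto. Qed.

Lemma lsum_le {T} (f g : T -> R) l : (forall a, In a l -> f a <= g a) -> lsum f l <= lsum g l.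
Proof. induction l; simpl; intros H; [lra|]. apply Rplus_le_compat; auto. Qed.

Lemma lsum_nonneg {T} (f : T -> R) l : (forall a, In a l -> 0 <= f a) -> 0 <= lsum f l.
Proof.
  induction l as [|a l IH]; simpl; intros H; [lra|].
  pose proof (H a (or_introl eq_refl)). enough (0 <= lsum f l) by lra. auto.
Qed.

Lemma lsum_map {T U} (f : U -> R) (g : T -> U) l : lsum f (map g l) = lsum (fun a => f (g a)) l.
Proof. induction l; simpl; auto. rewrite IHl; auto. Qed.

Lemma lsum_concat_map {T U} (f : U -> R) (g : T -> list U) l :
  lsum f (concat (map g l)) = lsum (fun a => lsum f (g a)) l.
Proof. induction l; simpl; auto. rewrite lsum_app, IHl; auto. Qed.

Lemma lsum_comm {T U} (g : T -> U -> R) l1 l2 :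
  lsum (fun a => lsum (g a) l2) l1 = lsum (fun b => lsum (fun a => g a b) l1) l2.
Proof.
  induction l1 as [|a l1 IH]; simpl.
  - induction l2; simpl; auto. rewrite <- IHl2; lra.
  - rewrite IH, <- lsum_plus. auto.
Qed.

Lemma lsum_list_prod {T U} (f : T * U -> R) l1 l2 :
  lsum f (list_prod l1 l2) = lsum (fun a => lsum (fun b => f (a, b)) l2) l1.
Proof. induction l1 as [|a l1 IH]; simpl; auto. rewrite lsum_app, IH, lsum_map. auto. Qed.

Lemma lsum_incl {T} (f : T -> R) : (forall a, 0 <= f a) ->
  forall l m, NoDup l -> incl l m -> lsum f l <= lsum f m.
Proof.
  intros Hf. induction l as [|a l IH]; intros m Hl Hlm.
  - apply lsum_nonneg; auto.
  - inversion Hl as [|? ? Ha Hl']; subst.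
    destruct (in_split a m (Hlm a (or_introl eq_refl))) as [m1 [m2 ->]].
    rewrite lsum_app. simpl.
    enough (lsum f l <= lsum f (m1 ++ m2)) by (rewrite lsum_app in H; lra).
    apply IH; auto. intros b Hb.
    destruct (in_app_or _ _ _ (Hlm b (or_intror Hb))) as [H|[<-|H]];
      [apply in_or_app; auto | contradiction | apply in_or_app; auto].
Qed.

Lemma sum_f_R0_lsum (f : nat -> R) n : sum_f_R0 f n = lsum f (seq 0 (S n)).
Proof. induction n; [simpl; lra|]. rewrite tech5, IHn, (seq_S (S n) 0), lsum_app. simpl. lra. Qed.

Lemma Un_cv_eventually_const (u : nat -> R) l N : (forall n, (n >= N)%nat -> u n = l) -> Un_cv u l.
Proof.
  intros H eps He. exists N. intros n Hn.
  rewrite H; auto. unfold Rdist. rewrite Rminus_diag, Rabs_R0; lra.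
Qed.

Lemma partial_sums_growing (f : nat -> R) : (forall n, 0 <= f n) -> Un_growing (sum_f_R0 f).
Proof. intros Hf n. simpl. specialize (Hf (S n)). lra. Qed.

Section FiniteAdditivity.
Context {X : Type}.
Variable V : set (set X).
Variable v : set X -> R.
Hypothesis Hms : measure_space V v.

Let HpV : prering V := proj1 Hms.
Let v_nonneg : forall A, V A -> 0 <= v A := proj1 (proj2 Hms).

Lemma v_emptyset : v emptyset = 0.
Proof.
  assert (H : infinite_sum (fun _ : nat => v emptyset) (v emptyset)).
  { apply (proj2 (proj2 Hms)); [apply HpV | intros; apply HpV | |].
    - intros n m _ x [[] _].
    - intros x; split; [intros [] | intros [_ []]]. }
  destruct (Rle_lt_or_eq_dec _ _ (v_nonneg _ (proj1 HpV))) as [Hp|Hp]; auto.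
  destruct (H _ Hp) as [N HN]. specialize (HN (S N) ltac:(lia)).
  rewrite sum_cte in HN. unfold Rdist in HN. rewrite !S_INR in HN.
  pose proof (pos_INR N). rewrite Rabs_right in HN; nra.
Qed.

Lemma sum_v_nth l n :
  (length l <= S n)%nat -> sum_f_R0 (fun k => v (nth k l emptyset)) n = lsum v l.
Proof.
  revert n; induction l as [|a l IH]; intros n Hn.
  - rewrite (sum_eq _ (fun _ => 0)), sum_cte; [simpl; lra|].
    intros [|k] _; apply v_emptyset.
  - destruct n as [|n]; simpl in Hn.
    + destruct l; simpl in *; [lra | lia].
    + rewrite decomp_sum by lia. simpl pred. rewrite IH by lia. auto.
Qed.

(* Countable additivity, applied to a finite partition padded with empty sets. *)
Lemma v_SV_decomp A l : V A -> SV_decomp V A l -> v A = lsum v l.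
Proof.
  intros HA [H1 [H2 H3]].
  assert (Hsum : infinite_sum (fun n => v (nth n l emptyset)) (v A)).
  { apply (proj2 (proj2 Hms)); [exact HA | intros n; apply (V_nth V HpV), H1 | |].
    - intros n m Hnm x [Hx1 Hx2]. apply list_disjoint_iff in H2.
      apply (H2 n m (nth_emptyset_lt _ _ _ Hx1) (nth_emptyset_lt _ _ _ Hx2) Hnm x); auto.
    - intros x; rewrite H3; apply list_union_nth. }
  apply (uniqueness_sum _ _ _ Hsum), (Un_cv_eventually_const _ _ (length l)).
  intros n Hn. apply sum_v_nth. lia.
Qed.

Lemma SV_decomp_inter_list_union (A : set X) (g : set X -> list (set X)) l : pairwise_disjoint l ->
  (forall C, In C l -> SV_decomp V (fun x => A x /\ C x) (g C)) ->
  SV_decomp V (fun x => A x /\ list_union l x) (concat (map g l)).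
Proof.
  induction l as [|C l IH]; intros Hl Hg; simpl.
  - split; [constructor | split; [constructor |]].
    intros x; split; [intros [_ Hx] | intros Hx]; destruct (list_union_nil _ Hx).
  - apply (SV_decomp_app V (fun x => A x /\ C x) (fun x => A x /\ list_union l x)).
    + apply Hg; simpl; auto.
    + apply IH; [eapply pairwise_disjoint_cons_tail; eauto | intros; apply Hg; simpl; auto].
    + intros x [[_ H1] [_ H2]]. apply (pairwise_disjoint_cons_head _ _ Hl x); auto.
    + intros x; rewrite list_union_cons; tauto.
Qed.

Lemma v_refine a l (w : set X -> list (set X)) : V a -> pairwise_disjoint l ->
  (forall x, a x -> list_union l x) ->
  (forall b, In b l -> SV_decomp V (fun x => a x /\ b x) (w b)) ->
  v a = lsum (fun b => lsum v (w b)) l.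
Proof.
  intros Ha Hl Hsub Hw. rewrite <- lsum_concat_map. apply v_SV_decomp; auto.
  apply (SV_decomp_ext V (fun x => a x /\ list_union l x)).
  - apply SV_decomp_inter_list_union; auto.
  - intros x; split; [|tauto]. intros Hx; split; auto.
Qed.

Lemma inter_decomp_exists (B C : set X) :
  exists l, V B -> V C -> SV_decomp V (fun x => B x /\ C x) l.
Proof.
  destruct (classic (V B /\ V C)) as [[HB HC]|H].
  - destruct (proj1 (SV_iff V _) (proj1 (proj2 HpV) B C HB HC)) as [l Hl]. eauto.
  - exists []; tauto.
Qed.

Definition inter_decomp (B C : set X) : list (set X) :=
  proj1_sig (constructive_indefinite_description _ (inter_decomp_exists B C)).

Lemma inter_decomp_spec B C : V B -> V C -> SV_decomp V (fun x => B x /\ C x) (inter_decomp B C).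
Proof. unfold inter_decomp. destruct (constructive_indefinite_description _ _); auto. Qed.

(* Both sums equal the double sum of [v] over the common refinement [a /\ b]. *)
Lemma lsum_v_SV_decomp_unique A l1 l2 :
  SV_decomp V A l1 -> SV_decomp V A l2 -> lsum v l1 = lsum v l2.
Proof.
  intros [H11 [H12 H13]] [H21 [H22 H23]]. rewrite Forall_forall in H11, H21.
  transitivity (lsum (fun a => lsum (fun b => lsum v (inter_decomp a b)) l2) l1).
  - apply lsum_ext. intros a Ha. apply v_refine; auto.
    + intros x Hx. apply H23, H13. exists a; auto.
    + intros b Hb. apply inter_decomp_spec; auto.
  - rewrite lsum_comm. apply lsum_ext. intros b Hb. symmetry. apply v_refine; auto.
    + intros x Hx. apply H13, H23. exists b; auto.
    + intros a Ha. apply (SV_decomp_ext V _ _ _ (inter_decomp_spec a b (H11 a Ha) (H21 b Hb))).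
      intros; tauto.
Qed.

(* The extension of [v] to S(V); its value off S(V) is irrelevant. *)
Definition mu (A : set X) : R :=
  match excluded_middle_informative (exists l, SV_decomp V A l) with
  | left H => lsum v (proj1_sig (constructive_indefinite_description _ H))
  | right _ => 0
  end.

Lemma mu_SV_decomp A l : SV_decomp V A l -> mu A = lsum v l.
Proof.
  intros H. unfold mu. destruct (excluded_middle_informative _) as [H'|H'].
  - destruct (constructive_indefinite_description _ _) as [l' Hl']. simpl.
    eapply lsum_v_SV_decomp_unique; eauto.
  - exfalso; eauto.
Qed.

Lemma mu_nonneg A : SV V A -> 0 <= mu A.
Proof.
  intros H. apply SV_iff in H as [l Hl]. rewrite (mu_SV_decomp _ _ Hl).
  destruct Hl as [H1 _]. rewrite Forall_forall in H1. apply lsum_nonneg; auto.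
Qed.

Lemma mu_V A : V A -> mu A = v A.
Proof. intros H. rewrite (mu_SV_decomp A [A]); [simpl; lra | apply SV_decomp_single, H]. Qed.

Lemma mu_disjoint_union A B C : SV V A -> SV V B -> disjoint A B ->
  (forall x, C x <-> A x \/ B x) -> mu C = mu A + mu B.
Proof.
  intros HA HB D E. apply SV_iff in HA as [la Ha], HB as [lb Hb].
  rewrite (mu_SV_decomp _ _ Ha), (mu_SV_decomp _ _ Hb), (mu_SV_decomp C (la ++ lb)).
  - apply lsum_app.
  - eapply SV_decomp_app; eauto.
Qed.

Lemma mu_diff A B : SV V A -> SV V B -> (forall x, A x -> B x) ->
  mu (fun x => B x /\ ~ A x) = mu B - mu A.
Proof.
  intros HA HB Hs. rewrite (mu_disjoint_union A (fun x => B x /\ ~ A x) B); auto.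
  - lra.
  - apply SV_diff; auto.
  - intros x; tauto.
  - intros x; destruct (classic (A x)); firstorder.
Qed.

Lemma mu_mono A B : SV V A -> SV V B -> (forall x, A x -> B x) -> mu A <= mu B.
Proof.
  intros HA HB Hs. pose proof (mu_diff A B HA HB Hs).
  pose proof (mu_nonneg (fun x => B x /\ ~ A x) (SV_diff _ HpV _ _ HB HA)). lra.
Qed.

Lemma mu_diff_le A B A' B' : SV V A -> SV V B -> SV V A' -> SV V B' ->
  (forall x, B' x -> A' x) -> (forall x, A x -> A' x) -> (forall x, B' x -> B x) ->
  mu (fun x => A x /\ ~ B x) <= mu A' - mu B'.
Proof.
  intros HA HB HA' HB' HBA' HAA' HBB'. rewrite <- mu_diff; auto.
  apply mu_mono; try apply SV_diff; auto. intros x [Hx Hnx]; auto.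
Qed.

Lemma mu_le_full A : V fullset -> SV V A -> mu A <= v fullset.
Proof.
  intros HX H. rewrite <- mu_V; auto. apply mu_mono; auto using SV_of_V. easy.
Qed.

End FiniteAdditivity.

Lemma sum_of_nat_le (a : nat * nat -> R) (c : nat -> R) (C : R) : (forall p, 0 <= a p) ->
  (forall k N, sum_f_R0 (fun j => a (k, j)) N <= c k) -> (forall K, sum_f_R0 c K <= C) ->
  forall N, sum_f_R0 (fun n => a (of_nat n)) N <= C.
Proof.
  intros Ha Hc HC N. rewrite sum_f_R0_lsum, <- (lsum_map a of_nat).
  apply Rle_trans with (lsum a (list_prod (seq 0 (S N)) (seq 0 (S N)))).
  - apply lsum_incl; auto.
    + apply NoDup_map_NoDup_ForallPairs; [|apply seq_NoDup].
      intros x y _ _ E. rewrite <- (cancel_to_of x), <- (cancel_to_of y), E. auto.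
    + intros p Hp. apply in_map_iff in Hp as [n [<- Hn]]. apply in_seq in Hn.
      destruct (of_nat n) as [k j] eqn:E.
      pose proof (to_nat_non_decreasing k j) as Hb. rewrite <- E, cancel_to_of in Hb.
      apply in_prod; apply in_seq; lia.
  - rewrite lsum_list_prod. apply Rle_trans with (lsum c (seq 0 (S N))).
    + apply lsum_le. intros k _. rewrite <- sum_f_R0_lsum. apply Hc.
    + rewrite <- sum_f_R0_lsum. apply HC.
Qed.

Section NullSets.
Context {X : Type}.
Variable V : set (set X).
Variable v : set X -> R.
Hypothesis Hms : measure_space V v.

Let HpV : prering V := proj1 Hms.
Let v_nonneg : forall A, V A -> 0 <= v A := proj1 (proj2 Hms).

Definition cover_le (D : set X) (c : R) : Prop :=
  exists At : nat -> set X, (forall t, V (At t)) /\ (forall x, D x -> exists t, At t x) /\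
    (forall N, sum_f_R0 (fun t => v (At t)) N <= c).

Lemma cover_le_weaken D D' c c' :
  cover_le D c -> (forall x, D' x -> D x) -> c <= c' -> cover_le D' c'.
Proof.
  intros [At [H1 [H2 H3]]] Hs Hc. exists At; repeat split; auto.
  intros N; specialize (H3 N); lra.
Qed.

Lemma cover_le_nonneg D c : cover_le D c -> 0 <= c.
Proof.
  intros [At [H1 [_ H3]]]. specialize (H3 0%nat). specialize (v_nonneg _ (H1 0%nat)).
  simpl in H3. lra.
Qed.

Lemma null_set_iff_cover_le D :
  null_set V v D <-> forall eps, 0 < eps -> exists c, c < eps /\ cover_le D c.
Proof.
  split.
  - intros H eps He. destruct (H eps He) as [At [l [H1 [H2 [H3 H4]]]]].
    exists l; split; auto. exists At; repeat split; auto.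
    intros N. apply sum_incr; auto.
  - intros H eps He. destruct (H eps He) as [c [Hc [At [H1 [H2 H3]]]]].
    assert (Hg : Un_growing (sum_f_R0 (fun t => v (At t))))
      by (apply partial_sums_growing; intros; apply v_nonneg, H1).
    assert (Hb : has_ub (sum_f_R0 (fun t => v (At t)))) by (exists c; intros r [i ->]; apply H3).
    destruct (growing_cv _ Hg Hb) as [l Hl].
    exists At, l. split; [auto | split; [auto | split; [exact Hl |]]].
    enough (l <= c) by lra.
    exact (Rle_cv_lim H3 Hl (Un_cv_eventually_const (fun _ => c) c 0 (fun _ _ => eq_refl))).
Qed.

Lemma null_subset D D' : null_set V v D -> (forall x, D' x -> D x) -> null_set V v D'.
Proof.
  intros H Hs eps He. destruct (H eps He) as [At [l [H1 [H2 [H3 H4]]]]].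
  exists At, l; repeat split; auto.
Qed.

Lemma cover_le_empty D : (forall x, ~ D x) -> cover_le D 0.
Proof.
  intros H. exists (fun _ => emptyset). split; [|split].
  - intros; apply HpV.
  - intros x Hx; destruct (H x Hx).
  - intros N. rewrite (v_emptyset V v Hms), sum_cte. lra.
Qed.

Lemma cover_le_SV T : SV V T -> cover_le T (mu V v T).
Proof.
  intros HT. apply SV_iff in HT as [l Hl]. rewrite (mu_SV_decomp V v Hms _ _ Hl).
  destruct Hl as [H1 [_ H3]].
  exists (fun t => nth t l emptyset). split; [|split].
  - intros n. apply (V_nth V HpV), H1.
  - intros x Hx. apply list_union_nth, H3, Hx.
  - intros N. rewrite <- (sum_v_nth V v Hms l (N + length l)) by lia.
    apply Rge_le, growing_prop; [|lia].
    apply partial_sums_growing. intros n. apply v_nonneg, (V_nth V HpV), H1.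
Qed.

Lemma cover_le_countable_union (D : nat -> set X) (c : nat -> R) (C : R) :
  (forall k, cover_le (D k) (c k)) -> (forall K, sum_f_R0 c K <= C) ->
  cover_le (fun x => exists k, D k x) C.
Proof.
  intros Hk HC. destruct (choice _ Hk) as [At HA].
  exists (fun n => At (fst (of_nat n)) (snd (of_nat n))). split; [|split].
  - intros n; apply HA.
  - intros x [k Hx]. destruct (proj1 (proj2 (HA k)) x Hx) as [j Hj].
    exists (to_nat (k, j)). rewrite cancel_of_to. auto.
  - apply (sum_of_nat_le (fun p => v (At (fst p) (snd p))) c); auto.
    + intros [k j]; apply v_nonneg, HA.
    + intros k; apply (HA k).
Qed.

Lemma null_union D1 D2 : null_set V v D1 -> null_set V v D2 -> null_set V v (fun x => D1 x \/ D2 x).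
Proof.
  rewrite !null_set_iff_cover_le. intros H1 H2 eps He.
  destruct (H1 (eps/2)) as [c1 [Hc1 C1]]; [lra|].
  destruct (H2 (eps/2)) as [c2 [Hc2 C2]]; [lra|].
  pose proof (cover_le_nonneg _ _ C1). pose proof (cover_le_nonneg _ _ C2).
  exists (c1 + c2). split; [lra|].
  set (D := fun k => match k with 0%nat => D1 | 1%nat => D2 | _ => fun _ => False end).
  set (c := fun k => match k with 0%nat => c1 | 1%nat => c2 | _ => 0 end).
  apply (cover_le_weaken (fun x => exists k, D k x) _ (c1 + c2) (c1 + c2)); [| |lra].
  - apply cover_le_countable_union with c.
    + intros [|[|k]]; auto. apply cover_le_empty. easy.
    + intros [|[|K]]; simpl; try lra. induction K; simpl in *; lra.
  - intros x [Hx|Hx]; [exists 0%nat | exists 1%nat]; auto.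
Qed.

End NullSets.

Lemma indic_true {X : Type} (A : set X) x : A x -> indic A x = 1.
Proof. unfold indic; destruct (excluded_middle_informative (A x)); tauto. Qed.

Lemma indic_false {X : Type} (A : set X) x : ~ A x -> indic A x = 0.
Proof. unfold indic; destruct (excluded_middle_informative (A x)); tauto. Qed.

Lemma indic_iff {X : Type} (A B : set X) x y : (A x <-> B y) -> indic A x = indic B y.
Proof. intros E. unfold indic. repeat destruct (excluded_middle_informative _); tauto. Qed.

Lemma indic_compl {X : Type} (A : set X) x : indic (fun y => ~ A y) x = 1 - indic A x.
Proof. unfold indic. repeat destruct (excluded_middle_informative _); try ring; tauto. Qed.

Lemma lsum_indic {X : Type} (la : list (set X)) x : pairwise_disjoint la ->
  lsum (fun B => indic B x) la = indic (list_union la) x.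
Proof.
  induction la as [|a la IH]; intros Hla; simpl.
  - rewrite indic_false; auto. apply list_union_nil.
  - rewrite IH by (eapply pairwise_disjoint_cons_tail; eauto).
    pose proof (pairwise_disjoint_cons_head _ _ Hla x).
    destruct (classic (a x)), (classic (list_union la x));
      rewrite ?(indic_true a), ?(indic_false a), ?(indic_true (list_union la)),
              ?(indic_false (list_union la)), ?(indic_true (list_union (a :: la))),
              ?(indic_false (list_union (a :: la))) by (rewrite ?list_union_cons; tauto);
      tauto || ring.
Qed.

Section SimpleFunctions.
Context {X : Type}.
Variable V : set (set X).
Variable v : set X -> R.
Hypothesis Hms : measure_space V v.

Let HpV : prering V := proj1 Hms.

Lemma simple_rep_ext l h g : simple_rep V l h -> (forall x, g x = h x) -> simple_rep V l g.
Proof. intros [H1 [H2 H3]] E. repeat split; auto. intros x; rewrite E; apply H3. Qed.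

Lemma simple_rep_app l1 l2 h1 h2 : simple_rep V l1 h1 -> simple_rep V l2 h2 ->
  (forall a b, In a (map snd l1) -> In b (map snd l2) -> disjoint a b) ->
  simple_rep V (l1 ++ l2) (fun x => h1 x + h2 x).
Proof.
  intros [H11 [H12 H13]] [H21 [H22 H23]] D. split; [|split].
  - apply Forall_app; auto.
  - rewrite map_app. apply list_disjoint_iff in H12, H22.
    apply list_disjoint_iff, pairwise_disjoint_app; auto.
  - intros x. rewrite H13, H23. symmetry. apply (lsum_app (fun p => fst p * indic (snd p) x)).
Qed.

Lemma rep_norm_app l1 l2 : rep_norm v (l1 ++ l2) = rep_norm v l1 + rep_norm v l2.
Proof. unfold rep_norm, rep_integral. rewrite map_app. apply lsum_app. Qed.

Definition const_rep (r : R) (la : list (set X)) : list (R * set X) := map (fun B => (r, B)) la.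

Lemma map_snd_const_rep r la : map snd (const_rep r la) = la.
Proof. unfold const_rep; rewrite map_map; apply map_id. Qed.

Lemma simple_rep_const r T la :
  SV_decomp V T la -> simple_rep V (const_rep r la) (fun x => r * indic T x).
Proof.
  intros [H1 [H2 H3]]. split; [|split].
  - apply Forall_map, H1.
  - rewrite map_snd_const_rep. apply list_disjoint_iff, H2.
  - intros x. change (r * indic T x = lsum (fun p => fst p * indic (snd p) x) (const_rep r la)).
    unfold const_rep. rewrite lsum_map. simpl.
    transitivity (r * lsum (fun B => indic B x) la).
    + rewrite lsum_indic by auto. rewrite (indic_iff T (list_union la) x x); auto.
    + clear H1 H2 H3. induction la; simpl; [ring|]. rewrite <- IHla. ring.
Qed.

Lemma rep_norm_const r la : rep_norm v (const_rep r la) = Rabs r * lsum v la.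
Proof.
  unfold rep_norm, rep_integral, const_rep. rewrite map_map.
  change (lsum (fun p => fst p * v (snd p)) (map (fun B => (Rabs r, B)) la) = Rabs r * lsum v la).
  rewrite lsum_map. simpl. induction la; simpl; [ring|]. rewrite IHla; ring.
Qed.

Lemma simple_norm_le_weaken h b b' : simple_norm_le V v h b -> b <= b' -> simple_norm_le V v h b'.
Proof. intros [l [Hl Hb]] Hbb. exists l; split; auto; lra. Qed.

Lemma simple_norm_le_indic T : SV V T -> simple_norm_le V v (indic T) (mu V v T).
Proof.
  intros HT. apply SV_iff in HT as [la Hla].
  exists (const_rep 1 la). split.
  - apply (simple_rep_ext _ _ _ (simple_rep_const 1 T la Hla)). intros; ring.
  - rewrite rep_norm_const, Rabs_R1, (mu_SV_decomp V v Hms _ _ Hla). lra.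
Qed.

Lemma simple_norm_le_indic_sub T1 T2 : SV V T1 -> SV V T2 ->
  simple_norm_le V v (fun x => indic T2 x - indic T1 x)
    (mu V v (fun x => T2 x /\ ~ T1 x) + mu V v (fun x => T1 x /\ ~ T2 x)).
Proof.
  intros H1 H2.
  destruct (proj1 (SV_iff V _) (SV_diff V HpV _ _ H2 H1)) as [la Ha].
  destruct (proj1 (SV_iff V _) (SV_diff V HpV _ _ H1 H2)) as [lb Hb].
  exists (const_rep 1 la ++ const_rep (-1) lb). split.
  - eapply simple_rep_ext; [apply simple_rep_app; try apply simple_rep_const; eauto|].
    + rewrite !map_snd_const_rep. intros a b Hia Hib x [Hxa Hxb].
      destruct Ha as [_ [_ Ha]], Hb as [_ [_ Hb]].
      assert (T2 x /\ ~ T1 x) by (apply Ha; exists a; auto).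
      assert (T1 x /\ ~ T2 x) by (apply Hb; exists b; auto). tauto.
    + intros x. unfold indic. repeat destruct (excluded_middle_informative _); try ring; tauto.
  - rewrite rep_norm_app, !rep_norm_const.
    rewrite (mu_SV_decomp V v Hms _ _ Ha), (mu_SV_decomp V v Hms _ _ Hb).
    rewrite Rabs_R1, Rabs_left by lra. lra.
Qed.

Lemma simple_norm_le_opp h b : simple_norm_le V v h b -> simple_norm_le V v (fun x => - h x) b.
Proof.
  intros [l [[H1 [H2 H3]] H4]]. exists (map (fun p => (- fst p, snd p)) l).
  split; [split; [|split]|].
  - apply Forall_map, H1.
  - rewrite map_map. exact H2.
  - intros x. rewrite H3.
    change (- lsum (fun p => fst p * indic (snd p) x) l =
            lsum (fun p => fst p * indic (snd p) x) (map (fun p => (- fst p, snd p)) l)).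
    rewrite lsum_map. simpl. clear H1 H2 H3 H4. induction l; simpl; [ring|]. rewrite <- IHl. ring.
  - unfold rep_norm, rep_integral in *. rewrite map_map.
    erewrite map_ext; [exact H4|]. intros p. simpl. rewrite Rabs_Ropp. auto.
Qed.

Lemma basic_seq_partial_sums (h : nat -> X -> R) b c : 0 <= b -> 0 <= c ->
  simple_norm_le V v (h 0%nat) b -> (forall k, simple_norm_le V v (h (S k)) (c * (/4) ^ S k)) ->
  basic_seq V v (fun n x => sum_f_R0 (fun k => h k x) n).
Proof.
  intros Hb Hc H0 HS. exists h, (4 * (b + c)). split; [|auto].
  intros [|k]; eapply simple_norm_le_weaken; eauto.
  - simpl. lra.
  - replace (4 * (b + c) * (/ 4) ^ S (S k)) with ((b + c) * (/4) ^ S k) by (simpl; field).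
    apply Rmult_le_compat_r; [apply pow_le|]; lra.
Qed.

Lemma L1_of_indic_approx (T : nat -> set X) (f : X -> R) (c : R) (N : set X) :
  (forall k, SV V (T k)) -> 0 <= c ->
  (forall k, mu V v (fun x => T (S k) x /\ ~ T k x) + mu V v (fun x => T k x /\ ~ T (S k) x)
               <= c * (/4) ^ (S k)) ->
  null_set V v N -> (forall x, ~ N x -> Un_cv (fun k => indic (T k) x) (f x)) -> L1 V v f.
Proof.
  intros HT Hc Hd HN Hcv.
  set (h := fun k x =>
    match k with 0%nat => indic (T 0%nat) x | S k => indic (T (S k)) x - indic (T k) x end).
  assert (Hs : forall n x, sum_f_R0 (fun k => h k x) n = indic (T n) x).
  { induction n; intros x; simpl; auto. rewrite IHn. ring. }
  exists (fun n x => sum_f_R0 (fun k => h k x) n), N. split; [|split; auto].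
  - apply (basic_seq_partial_sums h (mu V v (T 0%nat)) c); auto.
    + apply (mu_nonneg V v Hms), HT.
    + apply simple_norm_le_indic, HT.
    + intros k. eapply simple_norm_le_weaken; [apply simple_norm_le_indic_sub|]; auto.
  - intros x Hx. apply (Un_cv_ext (fun k => indic (T k) x)); auto.
Qed.

Lemma L1_null_modification f g D : L1 V v f -> null_set V v D ->
  (forall x, ~ D x -> g x = f x) -> L1 V v g.
Proof.
  intros [s [N [Hb [HN Hcv]]]] HD E. exists s, (fun x => N x \/ D x). repeat split; auto.
  - apply null_union; auto.
  - intros x Hx. rewrite E by tauto. apply Hcv. tauto.
Qed.

Lemma Vc_compl A : V fullset -> Vc V v A -> Vc V v (fun x => ~ A x).
Proof.
  intros HX [s [N [[h [M [Hh Hs]]] [HN Hcv]]]].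
  set (h' := fun k x => match k with 0%nat => indic fullset x | S k => - h k x end).
  assert (Hs' : forall n x, sum_f_R0 (fun k => h' k x) (S n) = 1 - s n x).
  { intros n x. rewrite Hs. induction n.
    - simpl. unfold h'. rewrite indic_true by easy. ring.
    - rewrite tech5, IHn, tech5. unfold h'. ring. }
  exists (fun n x => sum_f_R0 (fun k => h' k x) n), N. split; [|split; auto].
  - apply (basic_seq_partial_sums h' (mu V v fullset) (Rabs M)); auto using Rabs_pos.
    + apply (mu_nonneg V v Hms), SV_of_V, HX.
    + apply simple_norm_le_indic, SV_of_V, HX.
    + intros k. eapply simple_norm_le_weaken; [apply simple_norm_le_opp, Hh|].
      apply Rmult_le_compat_r; [apply pow_le; lra | apply RRle_abs].
  - (* The new partial sums are [c_X - s_n], shifted by one index. *)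
    intros x Hx. apply (CV_shift _ 1). rewrite indic_compl.
    apply (Un_cv_ext (fun n => 1 - s n x)).
    + intros n. rewrite Nat.add_1_r, Hs'. auto.
    + apply CV_minus; [apply (Un_cv_eventually_const _ _ 0); auto | auto].
Qed.

End SimpleFunctions.

Lemma indic_limit_superlevel {X : Type} (A : set X) x (u : nat -> R) :
  Un_cv u (indic A x) -> (A x <-> exists m, forall n, u (m + n)%nat > 1/2).
Proof.
  intros Hu. destruct (Hu (1/2) ltac:(lra)) as [N HN].
  assert (Hb : forall n, (n >= N)%nat -> indic A x - 1/2 < u n < indic A x + 1/2).
  { intros n Hn. specialize (HN n Hn). unfold Rdist in HN. apply Rabs_def2 in HN. lra. }
  split.
  - intros Hx. exists N. intros n. specialize (Hb (N + n)%nat ltac:(lia)).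
    rewrite indic_true in Hb; auto. lra.
  - intros [m Hm]. apply NNPP. intros Hx. specialize (Hb (m + N)%nat ltac:(lia)).
    specialize (Hm N). rewrite indic_false in Hb; auto. lra.
Qed.

Section SetClasses.
Context {X : Type}.
Variable V : set (set X).
Hypothesis HpV : prering V.
Hypothesis HX : V fullset.

Lemma sigma_of_SV (C : nat -> set X) :
  (forall n, SV V (C n)) -> sigma_of V (fun x => exists n, C n x).
Proof.
  intros HC. destruct (choice _ (fun n => proj1 (SV_iff V (C n)) (HC n))) as [l Hl].
  exists (fun p => nth (snd (of_nat p)) (l (fst (of_nat p))) emptyset). split.
  - intros p. apply (V_nth V HpV), Hl.
  - intros x; split.
    + intros [n Hx]. apply (Hl n), list_union_nth in Hx as [i Hi].
      exists (to_nat (n, i)). rewrite cancel_of_to. auto.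
    + intros [p Hx]. exists (fst (of_nat p)). apply (Hl _), list_union_nth. eauto.
Qed.

Lemma compl_sigma_delta B : sigma_of (delta_of (SV V)) B -> delta_of (sigma_of V) (fun x => ~ B x).
Proof.
  intros [Bm [HBm EB]]. destruct (choice _ HBm) as [C HC].
  exists (fun m x => exists n, ~ C m n x). split.
  - intros m. apply sigma_of_SV. intros n. apply SV_compl; auto. apply HC.
  - intros x. rewrite EB. split.
    + intros H m. apply not_all_ex_not. intros H'. apply H. exists m. apply (proj2 (HC m)); auto.
    + intros H [m Hm]. destruct (H m) as [n Hn]. apply Hn, (proj2 (HC m)), Hm.
Qed.

Lemma compl_delta_sigma B : delta_of (sigma_of V) B -> sigma_of (delta_of (SV V)) (fun x => ~ B x).
Proof.
  intros [Bm [HBm EB]]. destruct (choice _ HBm) as [C HC].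
  exists (fun m x => forall n, ~ C m n x). split.
  - intros m. exists (fun n x => ~ C m n x). split; [|tauto].
    intros n. apply SV_compl, SV_of_V, HC; auto.
  - intros x. rewrite EB. split.
    + intros H. apply not_all_ex_not in H as [m Hm]. exists m.
      intros n Hn. apply Hm, (proj2 (HC m) x). eauto.
    + intros [m Hm] H. destruct (proj1 (proj2 (HC m) x) (H m)) as [n Hn]. eapply Hm; eauto.
Qed.

Lemma simple_rep_determined l h x y : simple_rep V l h ->
  (forall B, In B (map snd l) -> (B x <-> B y)) -> h x = h y.
Proof.
  intros [_ [_ Hh]] Hxy. rewrite !Hh. clear Hh.
  induction l as [|p l IH]; simpl in *; auto.
  rewrite IH, (indic_iff (snd p) (snd p) x y); auto.
Qed.

Lemma SV_superlevel_sum (h : nat -> X -> R) (rep : nat -> list (R * set X)) n r :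
  (forall k, simple_rep V (rep k) (h k)) -> SV V (fun x => sum_f_R0 (fun k => h k x) n > r).
Proof.
  intros Hrep.
  apply (SV_determined_by V HpV HX (concat (map (fun k => map snd (rep k)) (seq 0 (S n))))).
  - apply Forall_forall. intros B HB.
    apply in_concat in HB as [lb [Hlb HB]]. apply in_map_iff in Hlb as [k [<- _]].
    apply in_map_iff in HB as [p [<- Hp]].
    destruct (Hrep k) as [H1 _]. rewrite Forall_forall in H1. apply SV_of_V, H1; auto.
  - intros x y Hxy Hx. erewrite sum_eq; [exact Hx|]. intros k Hk.
    apply (simple_rep_determined (rep k)); auto. intros B HB. symmetry. apply Hxy, in_concat.
    exists (map snd (rep k)). split; auto.
    apply in_map_iff. exists k; split; auto. apply in_seq. lia.
Qed.

Variable v : set X -> R.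

Lemma Vc_sigma_delta_symdiff A : Vc V v A ->
  exists B D, sigma_of (delta_of (SV V)) B /\ null_set V v D /\ (forall x, A x <-> symdiff B D x).
Proof.
  intros [s [N [[h [M [Hh Hs]]] [HN Hcv]]]].
  destruct (choice _ Hh) as [rep Hrep].
  set (B := fun x => exists m, forall n, s (m + n)%nat x > 1/2).
  exists B, (symdiff A B). split; [|split].
  - exists (fun m x => forall n, s (m + n)%nat x > 1/2). split; [|reflexivity].
    intros m. exists (fun n x => s (m + n)%nat x > 1/2). split; [|reflexivity].
    intros n. apply (SV_ext V (fun x => sum_f_R0 (fun k => h k x) (m + n) > 1/2)).
    + apply (SV_superlevel_sum h rep). intros k; apply Hrep.
    + intros x. rewrite Hs. reflexivity.
  - apply (null_subset V v N); auto. intros x Hx. apply NNPP. intros HxN.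
    pose proof (indic_limit_superlevel A x _ (Hcv x HxN)). unfold symdiff, B in *. tauto.
  - intros x. unfold symdiff. destruct (classic (A x)), (classic (B x)); tauto.
Qed.

End SetClasses.

Lemma telescope_sum (u : nat -> R) K : sum_f_R0 (fun n => u n - u (S n)) K = u 0%nat - u (S K).
Proof. induction K; simpl; [lra|]. simpl in IHK. rewrite IHK. lra. Qed.

Lemma geometric_tail_le (J K : nat) :
  sum_f_R0 (fun i => (/4) ^ (S (J + i))) K <= (/4) ^ (S J) * (4/3).
Proof.
  rewrite (sum_eq _ (fun i => (/4) ^ i * (/4) ^ (S J)))
    by (intros; rewrite <- pow_add; f_equal; lia).
  rewrite <- scal_sum, tech3 by lra.
  pose proof (pow_le (/4) (S K) ltac:(lra)). pose proof (pow_lt (/4) (S J) ltac:(lra)).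
  apply Rmult_le_compat_l; [lra|]. unfold Rdiv. replace (/ (1 - /4)) with (4/3) by field. lra.
Qed.

Lemma Un_cv_frequently (u : nat -> R) l eps : Un_cv u l -> 0 < eps ->
  forall N, exists n, (n >= N)%nat /\ l - eps < u n < l + eps.
Proof.
  intros Hu He N. destruct (Hu eps He) as [K HK]. exists (max K N). split; [lia|].
  specialize (HK (max K N) ltac:(lia)). unfold Rdist in HK. apply Rabs_def2 in HK. lra.
Qed.

Lemma strictly_increasing_choice (P : nat -> nat -> Prop) :
  (forall j N, exists k, (k >= N)%nat /\ P j k) ->
  exists f : nat -> nat, (forall j, P j (f j)) /\ (forall j, (f j < f (S j))%nat).
Proof.
  intros H. destruct (choice (fun jN k => (k >= snd jN)%nat /\ P (fst jN) k)) as [g Hg].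
  { intros [j N]. apply H. }
  exists (fix f j := match j with 0%nat => g (0%nat, 0%nat) | S j => g (S j, S (f j)) end).
  split; [intros [|j] | intros j]; apply (Hg (_, _)).
Qed.

Section SigmaDeltaApprox.
Context {X : Type}.
Variable V : set (set X).
Variable v : set X -> R.
Hypothesis Hms : measure_space V v.
Hypothesis HX : V fullset.
Let HpV : prering V := proj1 Hms.

Variable C : nat -> nat -> set X.
Hypothesis HC : forall m n, SV V (C m n).

Definition cap_upto (m n : nat) : set X := fun x => forall i, (i <= n)%nat -> C m i x.
Definition cupcap (k n : nat) : set X := fun x => exists m, (m <= k)%nat /\ cap_upto m n x.
Definition cupcap_limit : set X := fun x => exists m, forall i, C m i x.

Lemma SV_cap_upto m n : SV V (cap_upto m n).
Proof.
  induction n as [|n IH].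
  - apply (SV_ext V (C m 0%nat)); auto. intros x; split; [intros H; apply H; lia|].
    intros H i Hi. replace i with 0%nat by lia. auto.
  - apply (SV_ext V (fun x => cap_upto m n x /\ C m (S n) x)); [apply SV_inter; auto|].
    intros x; split; [intros H; split; [intros i Hi|]; apply H; lia|].
    intros [H1 H2] i Hi. destruct (Nat.eq_dec i (S n)) as [->|]; auto. apply H1; lia.
Qed.

Lemma SV_cupcap k n : SV V (cupcap k n).
Proof.
  induction k as [|k IH].
  - apply (SV_ext V (cap_upto 0%nat n)); [apply SV_cap_upto|].
    intros x; split; [|exists 0%nat; auto].
    intros [m [Hm H]]. replace m with 0%nat in H by lia. auto.
  - apply (SV_ext V (fun x => cupcap k n x \/ cap_upto (S k) n x)).
    { apply SV_union; auto using SV_cap_upto. }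
    intros x; split.
    + intros [m [Hm H]].
      destruct (Nat.eq_dec m (S k)) as [->|]; [right | left; exists m; split]; auto; lia.
    + intros [[m [Hm H]]|H]; [exists m | exists (S k)]; split; auto; lia.
Qed.

Lemma cupcap_mono k k' n n' x : (k <= k')%nat -> (n' <= n)%nat -> cupcap k n x -> cupcap k' n' x.
Proof. intros Hk Hn [m [Hm H]]. exists m. split; [lia|]. intros i Hi. apply H. lia. Qed.

Lemma cupcap_of_limit m k n x : (m <= k)%nat -> (forall i, C m i x) -> cupcap k n x.
Proof. intros Hm H. exists m. split; auto. intros i _; auto. Qed.

Lemma not_cupcap_limit_escapes x : ~ cupcap_limit x -> forall k, exists n, ~ cupcap k n x.
Proof.
  intros Hx k. assert (H : forall m, exists i, ~ C m i x).
  { intros m. apply not_all_ex_not. intros H. apply Hx. exists m; auto. }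
  induction k as [|k [n1 Hn1]].
  - destruct (H 0%nat) as [i Hi]. exists i. intros [m [Hm Hc]].
    replace m with 0%nat in Hc by lia. apply Hi, Hc. lia.
  - destruct (H (S k)) as [i Hi]. exists (max n1 i). intros [m [Hm Hc]].
    destruct (Nat.eq_dec m (S k)) as [->|Hmk].
    + apply Hi, Hc. lia.
    + apply Hn1. exists m. split; [lia|]. intros i' Hi'. apply Hc. lia.
Qed.

Definition mu_cupcap (k n : nat) : R := mu V v (cupcap k n).

Lemma mu_cupcap_decreasing k : Un_decreasing (mu_cupcap k).
Proof.
  intros n. apply (mu_mono V v Hms); try apply SV_cupcap.
  intros x; apply cupcap_mono; lia.
Qed.

Lemma mu_cupcap_lb k : has_lb (mu_cupcap k).
Proof.
  exists 0. intros r [i ->]. unfold opp_seq.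
  pose proof (mu_nonneg V v Hms _ (SV_cupcap k i)). unfold mu_cupcap. lra.
Qed.

Definition mu_cupcap_lim (k : nat) : R :=
  proj1_sig (decreasing_cv _ (mu_cupcap_decreasing k) (mu_cupcap_lb k)).

Lemma mu_cupcap_lim_cv k : Un_cv (mu_cupcap k) (mu_cupcap_lim k).
Proof. unfold mu_cupcap_lim; destruct (decreasing_cv _ _ _); auto. Qed.

Lemma mu_cupcap_lim_le k n : mu_cupcap_lim k <= mu_cupcap k n.
Proof. apply decreasing_ineq; [apply mu_cupcap_decreasing | apply mu_cupcap_lim_cv]. Qed.

Lemma mu_cupcap_lim_increasing : Un_growing mu_cupcap_lim.
Proof.
  intros k. apply (Rle_cv_lim (Un := mu_cupcap k) (Vn := mu_cupcap (S k)));
    try apply mu_cupcap_lim_cv.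
  intros n. apply (mu_mono V v Hms); try apply SV_cupcap. intros x; apply cupcap_mono; lia.
Qed.

Lemma mu_cupcap_lim_ub : has_ub mu_cupcap_lim.
Proof.
  exists (v fullset). intros r [i ->].
  refine (Rle_cv_lim _ (mu_cupcap_lim_cv i)
            (Un_cv_eventually_const (fun _ => v fullset) _ 0 (fun _ _ => eq_refl))).
  intros n. apply (mu_le_full V v Hms _ HX), SV_cupcap.
Qed.

Definition mu_cupcap_sup : R := proj1_sig (growing_cv _ mu_cupcap_lim_increasing mu_cupcap_lim_ub).

Lemma mu_cupcap_sup_cv : Un_cv mu_cupcap_lim mu_cupcap_sup.
Proof. unfold mu_cupcap_sup; destruct (growing_cv _ _ _); auto. Qed.

Lemma mu_cupcap_lim_le_sup k : mu_cupcap_lim k <= mu_cupcap_sup.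
Proof. apply growing_ineq; [apply mu_cupcap_lim_increasing | apply mu_cupcap_sup_cv]. Qed.

Section DiagonalChoice.
Variables kk nn : nat -> nat.
Hypothesis kk_increasing : forall j, (kk j < kk (S j))%nat.
Hypothesis nn_increasing : forall j, (nn j < nn (S j))%nat.
Hypothesis kk_close : forall j, mu_cupcap_sup - mu_cupcap_lim (kk j) <= (/4) ^ S j.
Hypothesis nn_close : forall j, mu_cupcap (kk j) (nn j) <= mu_cupcap_lim (kk j) + (/4) ^ S j.

Definition diag (j : nat) : set X := cupcap (kk j) (nn j).

Lemma kk_ge j : (j <= kk j)%nat.
Proof. induction j; [lia|]. specialize (kk_increasing j). lia. Qed.

Lemma diag_symdiff_le j :
  mu V v (fun x => diag (S j) x /\ ~ diag j x) + mu V v (fun x => diag j x /\ ~ diag (S j) x)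
  <= 3 * (/4) ^ S j.
Proof.
  unfold diag. pose proof (kk_increasing j). pose proof (nn_increasing j).
  assert (E1 : mu V v (fun x => cupcap (kk j) (nn j) x /\ ~ cupcap (kk (S j)) (nn (S j)) x)
               <= mu_cupcap (kk j) (nn j) - mu_cupcap (kk j) (nn (S j))).
  { apply (mu_diff_le V v Hms); auto using SV_cupcap; intros x; apply cupcap_mono; lia. }
  assert (E2 : mu V v (fun x => cupcap (kk (S j)) (nn (S j)) x /\ ~ cupcap (kk j) (nn j) x)
               <= mu_cupcap (kk (S j)) (nn (S j)) - mu_cupcap (kk j) (nn (S j))).
  { apply (mu_diff_le V v Hms); auto using SV_cupcap; intros x; apply cupcap_mono; lia. }
  pose proof (nn_close j). pose proof (nn_close (S j)). pose proof (kk_close j).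
  pose proof (mu_cupcap_lim_le (kk j) (nn (S j))). pose proof (mu_cupcap_lim_le_sup (kk (S j))).
  assert (0 < (/4) ^ j) by (apply pow_lt; lra). simpl pow in *. lra.
Qed.

Definition escape (j : nat) : set X :=
  fun x => exists n, cupcap (kk j) (nn j + n) x /\ ~ cupcap (kk j) (nn j + S n) x.

Lemma cover_le_escape j : cover_le V v (escape j) ((/4) ^ S j).
Proof.
  apply (cover_le_countable_union V v Hms _
           (fun n => mu_cupcap (kk j) (nn j + n) - mu_cupcap (kk j) (nn j + S n))).
  - intros n. eapply cover_le_weaken.
    { apply (cover_le_SV V v Hms), SV_diff, SV_cupcap; auto using SV_cupcap. }
    + intros x Hx; exact Hx.
    + unfold mu_cupcap. rewrite (mu_diff V v Hms); auto using SV_cupcap; [lra|].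
      intros x; apply cupcap_mono; lia.
  - intros K. rewrite (telescope_sum (fun n => mu_cupcap (kk j) (nn j + n))), Nat.add_0_r.
    pose proof (nn_close j). pose proof (mu_cupcap_lim_le (kk j) (nn j + S K)). lra.
Qed.

Lemma escape_of_diag x j : ~ cupcap_limit x -> diag j x -> escape j x.
Proof.
  intros Hx HT. destruct (not_cupcap_limit_escapes x Hx (kk j)) as [n0 Hn0].
  apply NNPP. intros Hesc. apply Hn0.
  assert (Hall : forall n, cupcap (kk j) (nn j + n) x).
  { induction n; [rewrite Nat.add_0_r; exact HT|].
    apply NNPP. intros Hn. apply Hesc. exists n; auto. }
  apply (cupcap_mono (kk j) (kk j) (nn j + n0)); auto; lia.
Qed.

Definition exceptional : set X :=
  fun x => ~ cupcap_limit x /\ forall J, exists j, (j >= J)%nat /\ diag j x.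

Lemma exceptional_null : null_set V v exceptional.
Proof.
  apply null_set_iff_cover_le; auto. intros eps He.
  destruct (pow_lt_1_zero (/4) ltac:(rewrite Rabs_right; lra) (eps * 3 / 4) ltac:(lra)) as [J HJ].
  specialize (HJ (S J) ltac:(lia)). rewrite Rabs_right in HJ by (apply Rle_ge, pow_le; lra).
  exists ((/4) ^ (S J) * (4/3)). split; [lra|].
  eapply cover_le_weaken.
  - apply (cover_le_countable_union V v Hms (fun i => escape (J + i)) (fun i => (/4) ^ S (J + i))).
    + intros i. apply cover_le_escape.
    + intros K. apply geometric_tail_le.
  - intros x [Hx Hinf]. destruct (Hinf J) as [j [Hj HT]]. exists (j - J)%nat.
    replace (J + (j - J))%nat with j by lia. apply escape_of_diag; auto.
  - lra.
Qed.

Lemma indic_diag_cv x : ~ exceptional x -> Un_cv (fun j => indic (diag j) x) (indic cupcap_limit x).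
Proof.
  intros Hx. destruct (classic (cupcap_limit x)) as [HB|HB].
  - destruct HB as [m Hm]. apply (Un_cv_eventually_const _ _ m). intros j Hj.
    rewrite !indic_true; [auto | exists m; auto |].
    apply (cupcap_of_limit m); auto. pose proof (kk_ge j). lia.
  - assert (H : ~ forall J, exists j, (j >= J)%nat /\ diag j x)
      by (intros H; apply Hx; split; auto).
    apply not_all_ex_not in H as [J HJ]. apply (Un_cv_eventually_const _ _ J). intros j Hj.
    rewrite !indic_false; auto. intros HT. apply HJ. eauto.
Qed.

Lemma Vc_cupcap_limit_of_choice : Vc V v cupcap_limit.
Proof.
  apply (L1_of_indic_approx V v Hms diag _ 3 exceptional).
  - intros j. apply SV_cupcap.
  - lra.
  - apply diag_symdiff_le.
  - apply exceptional_null.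
  - apply indic_diag_cv.
Qed.

End DiagonalChoice.

Lemma Vc_cupcap_limit : Vc V v cupcap_limit.
Proof.
  assert (He : forall j, 0 < (/4) ^ S j) by (intros; apply pow_lt; lra).
  destruct (strictly_increasing_choice
              (fun j k => mu_cupcap_sup - mu_cupcap_lim k <= (/4) ^ S j)) as [kk [Hk Hkk]].
  { intros j N. destruct (Un_cv_frequently _ _ _ mu_cupcap_sup_cv (He j) N) as [k [Hk Hb]].
    exists k. split; auto. lra. }
  destruct (strictly_increasing_choice
              (fun j n => mu_cupcap (kk j) n <= mu_cupcap_lim (kk j) + (/4) ^ S j))
    as [nn [Hn Hnn]].
  { intros j N. destruct (Un_cv_frequently _ _ _ (mu_cupcap_lim_cv (kk j)) (He j) N) as [n [Hn Hb]].
    exists n. split; auto. lra. }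
  apply (Vc_cupcap_limit_of_choice kk nn); auto.
Qed.

End SigmaDeltaApprox.

Lemma Vc_sigma_delta {X : Type} (V : set (set X)) (v : set X -> R) B :
  measure_space V v -> V fullset -> sigma_of (delta_of (SV V)) B -> Vc V v B.
Proof.
  intros Hms HX [Bm [HBm EB]]. destruct (choice _ HBm) as [C HC].
  destruct (Vc_cupcap_limit V v Hms HX C (fun m => proj1 (HC m))) as [s [N [Hs [HN Hcv]]]].
  exists s, N. split; [|split]; auto. intros x Hx.
  rewrite (indic_iff B (cupcap_limit C) x x); auto.
  rewrite EB. split; intros [m Hm]; exists m; apply (proj2 (HC m)); auto.
Qed.

Lemma Vc_symdiff_null {X : Type} (V : set (set X)) (v : set X -> R) A B D :
  measure_space V v -> Vc V v B -> null_set V v D -> (forall x, A x <-> symdiff B D x) -> Vc V v A.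
Proof.
  intros Hms HB HD E. apply (L1_null_modification V v Hms (indic B) (indic A) D); auto.
  intros x Hx. apply indic_iff. rewrite E. unfold symdiff. tauto.
Qed.

Theorem mainTheorem10 (X : Type) (V : set (set X)) (v : set X -> R)
  (Hms : measure_space V v) (HX : V fullset) (A : set X) :
  (Vc V v A <->
     exists B D, sigma_of (delta_of (SV V)) B /\ null_set V v D /\
                 (forall x, A x <-> symdiff B D x)) /\
  (Vc V v A <->
     exists B D, delta_of (sigma_of V) B /\ null_set V v D /\
                 (forall x, A x <-> symdiff B D x)).
Proof.
  pose proof (proj1 Hms) as HpV.
  split; split.
  - apply Vc_sigma_delta_symdiff; auto.
  - intros (B & D & HB & HD & E). apply (Vc_symdiff_null V v A B D); auto using Vc_sigma_delta.
  - intros HA. destruct (Vc_sigma_delta_symdiff V HpV HX v _ (Vc_compl V v Hms _ HX HA))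
      as (B & D & HB & HD & E).
    exists (fun x => ~ B x), D. split; [apply compl_sigma_delta; auto | split; auto].
    intros x. specialize (E x). unfold symdiff in *.
    destruct (classic (A x)), (classic (B x)); tauto.
  - intros (B & D & HB & HD & E).
    apply (Vc_symdiff_null V v A (fun x => ~ ~ B x) D); auto.
    + apply Vc_compl, Vc_sigma_delta, compl_delta_sigma; auto.
    + intros x. rewrite E. unfold symdiff. destruct (classic (B x)); tauto.
Qed.
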